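(* Let $G$ be a simple cubic graph on vertex set $[n]$ with girth at least $16$, let $A$ be a MAI set of $G$, $B=V(G)\setminus A$, and let $Y$ (resp. $Z$) be the set of vertices of degree $1$ in $G[A]$ (resp. $G[B]$). Let $J$ be the set of edges of $G$ with one end in $Y$ and the other in $Z$ (under these hypotheses $J$ is a matching). Let $H=H(A)$ be the graph with vertex set $J$ in which two distinct elements $yz, y'z'\in J$ ($y,y'\in Y$, $z,z'\in Z$) are adjacent if $yy'\in E(G)$ or $zz'\in E(G)$. Then $G$ has at least $I(H)$ distinct MAI sets.
   Context: A vertex set $A$ of a graph $G$ is an AI set (almost independent set) if $\Delta(G[A])\le 1$, i.e. every component of the induced subgraph $G[A]$ is a single vertex or a single edge. A vertex set $A$ is a MAI set (maximum almost independent set) of $G$ if (M1) $A$ is an AI set, (M2) $A$ contains an independent set of size $\alpha(G)$, and (M3) $A$ has maximum cardinality among all vertex sets satisfying (M1) and (M2). For a graph $H$, $I(H)$ denotes the total number of independent sets of $H$, including the empty set. *)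

From mathcomp Require Import all_boot.
Set Implicit Arguments. Unset Strict Implicit. Unset Printing Implicit Defensive.

Section Graph.
Variables (V : finType) (e : rel V).

Definition simple_graph := symmetric e /\ irreflexive e.

Definition nbhd (v : V) : {set V} := [set w | e v w].

Definition cubic := forall v : V, #|nbhd v| = 3.

(* every cycle (uniq seq, consecutive adjacent, closing edge) of length >= 3
   has length >= g *)
Definition girth_at_least (g : nat) :=
  forall s : seq V, uniq s -> cycle e s -> 3 <= size s -> g <= size s.

Definition independent (S : {set V}) := [forall x in S, forall y in S, ~~ e x y].

Definition alpha := \max_(S : {set V} | independent S) #|S|.

Definition deg_in (A : {set V}) (v : V) := #|nbhd v :&: A|.

Definition AI_set (A : {set V}) := forall v, v \in A -> deg_in A v <= 1.

Definition AI_with_max_indep (A : {set V}) :=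
  AI_set A /\ exists2 S : {set V}, S \subset A & independent S /\ #|S| = alpha.

Definition MAI_set (A : {set V}) :=
  AI_with_max_indep A /\ forall A' : {set V}, AI_with_max_indep A' -> #|A'| <= #|A|.

Definition deg1 (A : {set V}) : {set V} := [set v in A | deg_in A v == 1].

(* J: edges yz with y in Y (deg 1 in G[A]) and z in Z (deg 1 in G[B]),
   recorded as ordered pairs (y, z); since Y and Z are disjoint, each such
   edge corresponds to exactly one pair. *)
Definition Jset (A : {set V}) : {set V * V} :=
  [set p | [&& p.1 \in deg1 A, p.2 \in deg1 (~: A) & e p.1 p.2]].

Definition H_adj (p q : V * V) := (p != q) && (e p.1 q.1 || e p.2 q.2).

(* I(H(A)): number of independent sets of H(A), including the empty set *)
Definition IH (A : {set V}) : nat :=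
  #|[set S : {set V * V} | (S \subset Jset A) &&
      [forall p in S, forall q in S, ~~ H_adj p q]]|.

End Graph.

From mathcomp Require Import all_boot.
Set Implicit Arguments. Unset Strict Implicit. Unset Printing Implicit Defensive.

(* Let I be a maximum independent set inside A. If Y is an independent set of
   vertices of degree 1 in G[A], replacing every y in I :&: Y by its neighbour
   in G[A] gives an independent set of size alpha inside A :\: Y.  Hence an
   independent set Z outside A whose neighbours in A all lie in Y :|: U has at
   most #|U| elements; with U empty, resp. a single isolated vertex of G[A],
   this rules out the two local configurations (using that G has no triangles,
   which is all the girth hypothesis is needed for) that could stop the set
   A_S (called Jswap S below), obtained from A by trading y for z for every
   edge yz of an independent set S of H, from being almost independent.
   A_S then contains an alpha-set by the same exchange, is at least as large
   as A, hence is a MAI set, and S is read off from A_S as the pairs of J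
   whose Z-end lies in A_S. *)

Lemma card2_eq_set2 (T : finType) (S : {set T}) a b :
  #|S| = 2 -> a \in S -> b \in S -> a != b -> S = [set a; b].
Proof.
by move=> S2 aS bS ab; apply/eqP; rewrite eq_sym eqEcard subUset !sub1set aS bS cards2 ab S2.
Qed.

Lemma cardsU_disjoint (T : finType) (S1 S2 : {set T}) :
  [disjoint S1 & S2] -> #|S1 :|: S2| = #|S1| + #|S2|.
Proof. by move=> disj; rewrite cardsU (disjoint_setI0 disj) cards0 subn0. Qed.

Section Independence.
Variables (V : finType) (e : rel V).
Hypotheses (e_sym : symmetric e) (e_irr : irreflexive e).

Lemma independentP (S : {set V}) :
  reflect {in S &, forall x y, ~~ e x y} (independent e S).
Proof.
apply: (iffP forall_inP) => [S_ind x y xS yS | S_ind x xS].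
  by move/forall_inP: (S_ind x xS); apply.
by apply/forall_inP => y; exact: S_ind.
Qed.

Lemma independent_card_le_alpha (S : {set V}) : independent e S -> #|S| <= alpha e.
Proof. by move=> S_ind; apply: (@leq_bigmax_cond _ (independent e) (fun S => #|S|)). Qed.

Lemma independentS (S T : {set V}) : T \subset S -> independent e S -> independent e T.
Proof.
move=> /subsetP TS /independentP S_ind; apply/independentP => x y /TS xS /TS yS.
exact: S_ind.
Qed.

Lemma independentU (S T : {set V}) :
  independent e S -> independent e T -> {in S & T, forall x y, ~~ e x y} ->
  independent e (S :|: T).
Proof.
move=> /independentP S_ind /independentP T_ind ST; apply/independentP => x y.
case/setUP=> [xS | xT] /setUP [yS | yT]; [exact: S_ind | exact: ST | | exact: T_ind].
by rewrite e_sym; exact: ST.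
Qed.

Lemma independent_set1 a : independent e [set a].
Proof. by apply/independentP => x y /set1P -> /set1P ->; rewrite e_irr. Qed.

Lemma independent_set2 a b : ~~ e a b -> independent e [set a; b].
Proof.
move=> nab; apply: independentU; rewrite ?independent_set1 // => x y /set1P -> /set1P ->.
exact: nab.
Qed.

Lemma triangle_free_of_girth g : girth_at_least e g -> 3 < g ->
  forall a b c, e a b -> e b c -> e c a -> False.
Proof.
move=> girth_g g_gt3 a b c ab bc ca.
have neq x y : e x y -> x != y by apply: contraTneq => ->; rewrite e_irr.
have := girth_g [:: a; b; c]; rewrite /cycle /= !inE negb_or.
rewrite (neq a b) // (neq b c) // eq_sym (neq c a) // ab bc ca.
by move=> /(_ isT isT isT); rewrite leqNgt g_gt3.
Qed.

Lemma deg_in_setC (A : {set V}) v : cubic e -> deg_in e A v + deg_in e (~: A) v = 3.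
Proof. by move=> cub; rewrite /deg_in -setDE cardsID cub. Qed.

End Independence.

Section AlmostIndependent.
Variables (V : finType) (e : rel V) (A : {set V}).
Hypotheses (e_sym : symmetric e) (e_irr : irreflexive e) (A_AI : AI_set e A).

Lemma AI_neighbour_uniq p x y :
  p \in A -> x \in A -> y \in A -> e p x -> e p y -> x = y.
Proof.
move=> pA xA yA px py; have := A_AI pA.
by move/card_le1_eqP/(_ y x); apply; rewrite !inE ?px ?py ?xA ?yA.
Qed.

(* Meaningful only when v has degree 1 in G[A]. *)
Definition partner v := odflt v [pick w in nbhd e v :&: A].

Lemma partnerP v : deg_in e A v = 1 -> partner v \in A /\ e v (partner v).
Proof.
rewrite /deg_in /partner => deg1; case: pickP => [w | none].
  by rewrite !inE => /andP [-> ->].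
by move: deg1; rewrite (eq_card0 none).
Qed.

Section Exchange.
Variables (I X : {set V}).
Hypotheses (IA : I \subset A) (I_ind : independent e I).
Hypotheses (XA : X \subset A) (X_deg1 : {in X, forall x, deg_in e A x = 1}).
Hypothesis X_ind : independent e X.

Definition exchange := (I :\: X) :|: [set partner x | x in I :&: X].

Lemma partner_in x : x \in X -> partner x \in A /\ e x (partner x).
Proof. by move/X_deg1; exact: partnerP. Qed.

Lemma partner_nbhd_uniq x w : x \in X -> w \in A -> e (partner x) w -> w = x.
Proof.
move=> xX wA pw; have [pA xp] := partner_in xX.
by apply: (AI_neighbour_uniq pA wA (subsetP XA x xX) pw); rewrite e_sym.
Qed.

Lemma partner_notin (S : {set V}) x :
  independent e S -> x \in S -> x \in X -> partner x \notin S.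
Proof.
move=> /independentP S_ind xS xX; apply/negP => pS.
by have := S_ind _ _ xS pS; rewrite (partner_in xX).2.
Qed.

Lemma exchange_sub : exchange \subset A :\: X.
Proof.
apply/subsetP => v /setUP [/setDP [vI vX] | /imsetP [x /setIP [xI xX] ->]].
  by rewrite inE vX (subsetP IA).
by rewrite inE partner_notin // (partner_in xX).1.
Qed.

Lemma exchange_independent : independent e exchange.
Proof.
apply: (independentU e_sym).
- by apply: independentS I_ind; exact: subsetDl.
- apply/independentP => _ _ /imsetP [x /setIP [_ xX] ->] /imsetP [y /setIP [_ yX] ->].
  apply/negP => /(partner_nbhd_uniq xX (partner_in yX).1) yx.
  by move/independentP: X_ind => /(_ x y xX yX); rewrite -yx e_sym (partner_in yX).2.
- move=> u _ /setDP [uI uX] /imsetP [y /setIP [_ yX] ->]; rewrite e_sym.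
  apply/negP => /(partner_nbhd_uniq yX (subsetP IA u uI)) uy.
  by move: uX; rewrite uy yX.
Qed.

Lemma card_exchange : #|exchange| = #|I|.
Proof.
have disj : [disjoint I :\: X & [set partner x | x in I :&: X]].
  rewrite disjoint_sym disjoints_subset; apply/subsetP => _ /imsetP [x /setIP [xI xX] ->].
  by rewrite !inE negb_and (partner_notin I_ind) ?orbT.
rewrite /exchange -(cardsID X I) addnC cardsU_disjoint //.
rewrite card_in_imset // => x y /setIP [_ xX] /setIP [_ yX] pxy.
apply/esym/(partner_nbhd_uniq xX (subsetP XA y yX)).
by rewrite pxy e_sym (partner_in yX).2.
Qed.

Lemma exchangeP :
  [/\ exchange \subset A :\: X, independent e exchange & #|exchange| = #|I|].
Proof. by split; [exact: exchange_sub | exact: exchange_independent | exact: card_exchange]. Qed.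

End Exchange.

Section MaxIndependent.
Variable I : {set V}.
Hypothesis IA : I \subset A.
Hypothesis no_triangle : forall a b c, e a b -> e b c -> e c a -> False.
Hypotheses (I_ind : independent e I) (I_card : #|I| = alpha e).

Lemma outside_card_le_blockers (Y U Z : {set V}) :
  Y \subset A -> {in Y, forall y, deg_in e A y = 1} -> independent e Y ->
  independent e Z -> [disjoint Z & A] ->
  {in Z, forall z, nbhd e z :&: A \subset Y :|: U} -> #|Z| <= #|U|.
Proof.
move=> YA Y_deg1 Y_ind Z_ind ZA Z_nbhd.
have [KAY K_ind K_card] := exchangeP IA I_ind YA Y_deg1 Y_ind.
set K := exchange I Y in KAY K_ind K_card.
have KZ : [disjoint K :\: U & Z].
  rewrite disjoint_sym; apply: disjointWr ZA.
  by apply/subsetP => k /setDP [/(subsetP KAY) /setDP []].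
have KUZ_ind : independent e ((K :\: U) :|: Z).
  apply: (independentU e_sym) => //.
    by apply: independentS K_ind; exact: subsetDl.
  move=> k z /setDP [kK kU] zZ; apply/negP => kz.
  have [kA kY] : k \in A /\ k \notin Y by move/(subsetP KAY): kK; rewrite inE => /andP [].
  have /(subsetP (Z_nbhd z zZ)) : k \in nbhd e z :&: A by rewrite !inE e_sym kz.
  by rewrite inE (negbTE kY) (negbTE kU).
have := independent_card_le_alpha KUZ_ind; rewrite cardsU_disjoint // -I_card.
rewrite -K_card -(cardsID U K) addnC leq_add2r => /leq_trans; apply.
exact/subset_leq_card/subsetIr.
Qed.

Lemma deg1_neighbours_eq z a b :
  z \notin A -> deg_in e A z = 2 -> a \in A -> b \in A ->
  deg_in e A a = 1 -> deg_in e A b = 1 -> e z a -> e z b -> a = b.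
Proof.
move=> zA z_deg2 aA bA a_deg1 b_deg1 za zb; case: (eqVneq a b) => // ab; exfalso.
have nab : ~~ e a b by apply/negP => ab'; apply: (no_triangle za ab'); rewrite e_sym.
have Nz : nbhd e z :&: A = [set a; b].
  by apply: (card2_eq_set2 z_deg2); rewrite ?inE ?za ?zb.
suff: #|[set z]| <= #|@set0 V| by rewrite cards1 cards0.
apply: (outside_card_le_blockers (Y := [set a; b])).
- by rewrite subUset !sub1set aA bA.
- by move=> y /set2P [] ->.
- exact: independent_set2.
- exact: independent_set1.
- by rewrite disjoints1.
- by move=> _ /set1P ->; rewrite Nz setU0.
Qed.

Lemma deg1_neighbours_adjacent u z1 z2 y1 y2 :
  u \in A -> deg_in e A u = 0 -> z1 != z2 -> e u z1 -> e u z2 ->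
  z1 \notin A -> z2 \notin A -> deg_in e A z1 = 2 -> deg_in e A z2 = 2 ->
  y1 \in A -> y2 \in A -> deg_in e A y1 = 1 -> deg_in e A y2 = 1 ->
  e z1 y1 -> e z2 y2 -> e y1 y2.
Proof.
move=> uA u_deg0 z12 uz1 uz2 z1A z2A z1_deg2 z2_deg2 y1A y2A y1_deg1 y2_deg1 zy1 zy2.
apply/contraT => ny12.
have Nz z y : deg_in e A z = 2 -> e u z -> e z y -> y \in A -> deg_in e A y = 1 ->
    nbhd e z :&: A = [set y; u].
  move=> z_deg2 uz zy yA y_deg1; apply: (card2_eq_set2 z_deg2).
  - by rewrite !inE zy.
  - by rewrite !inE e_sym uz.
  - by apply: contra_eqN y_deg1 => /eqP ->; rewrite u_deg0.
have nz12 : ~~ e z1 z2 by apply/negP => z12'; apply: (no_triangle uz1 z12'); rewrite e_sym.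
suff: #|[set z1; z2]| <= #|[set u]| by rewrite cards2 z12 cards1.
apply: (outside_card_le_blockers (Y := [set y1; y2])).
- by rewrite subUset !sub1set y1A y2A.
- by move=> y /set2P [] ->.
- exact: independent_set2.
- exact: independent_set2.
- by rewrite disjoints_subset subUset !sub1set !inE z1A z2A.
- move=> z /set2P [] ->; [rewrite (Nz z1 y1) | rewrite (Nz z2 y2)] => //;
    by apply/subsetP => x; rewrite !inE => /orP [] /eqP ->; rewrite eqxx ?orbT.
Qed.

Hypothesis cub : cubic e.
Hypothesis A_max : forall A', AI_with_max_indep e A' -> #|A'| <= #|A|.

Lemma JsetP p : p \in Jset e A ->
  [/\ p.1 \in A, deg_in e A p.1 = 1, p.2 \notin A, deg_in e A p.2 = 2 & e p.1 p.2].
Proof.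
rewrite !inE => /and3P [/andP [p1A /eqP p1_deg] /andP [p2A /eqP p2_deg] p12].
split=> //; move: (deg_in_setC A p.2 cub).
by rewrite p2_deg addn1 => [[]].
Qed.

Lemma Jset_snd_inj p q : p \in Jset e A -> q \in Jset e A -> p.2 = q.2 -> p = q.
Proof.
move=> /JsetP [p1A p1_deg p2A p2_deg p12] /JsetP [q1A q1_deg _ _ q12] pq2.
have pq1 : p.1 = q.1.
  by apply: (deg1_neighbours_eq p2A p2_deg) => //; rewrite e_sym // pq2.
by rewrite [p]surjective_pairing [q]surjective_pairing pq1 pq2.
Qed.

Section HIndependent.
Variable S : {set V * V}.
Hypotheses (SJ : S \subset Jset e A) (S_ind : {in S &, forall p q, ~~ H_adj e p q}).

Definition Jswap := (A :\: [set p.1 | p in S]) :|: [set p.2 | p in S].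

Lemma S_JsetP p : p \in S ->
  [/\ p.1 \in A, deg_in e A p.1 = 1, p.2 \notin A, deg_in e A p.2 = 2 & e p.1 p.2].
Proof. by move=> pS; apply: JsetP; exact: (subsetP SJ). Qed.

Lemma S_nonadj p q : p \in S -> q \in S -> p != q -> ~~ e p.1 q.1 /\ ~~ e p.2 q.2.
Proof. by move=> pS qS pq; move: (S_ind pS qS); rewrite /H_adj pq negb_or => /andP. Qed.

Lemma Jswap_deg_isolated v : v \in A -> deg_in e A v = 0 -> deg_in e Jswap v <= 1.
Proof.
move=> vA v_deg0; apply/card_le1_eqP => w1 w2.
have inZ w : w \in nbhd e v :&: Jswap -> exists2 q, q \in S & w = q.2.
  rewrite /Jswap !inE => /andP [vw /orP [/andP [_ wA] | /imsetP //]].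
  by move/card0_eq: v_deg0 => /(_ w); rewrite !inE vw wA.
move=> w1N w2N; have [q1 q1S w1q] := inZ _ w1N; have [q2 q2S w2q] := inZ _ w2N.
have vz1 : e v q1.2 by rewrite -w1q; move: w1N; rewrite !inE => /andP [].
have vz2 : e v q2.2 by rewrite -w2q; move: w2N; rewrite !inE => /andP [].
rewrite w1q w2q; case: (eqVneq q2.2 q1.2) => // z21; exfalso.
have [q1A q1_deg z1A z1_deg zy1] := S_JsetP q1S.
have [q2A q2_deg z2A z2_deg zy2] := S_JsetP q2S.
have q21 : q2 != q1 by apply: contra_neq z21 => ->.
have [nq21 _] := S_nonadj q2S q1S q21; apply: (negP nq21).
by apply: (deg1_neighbours_adjacent vA v_deg0 z21) => //; rewrite e_sym.
Qed.

Lemma Jswap_deg_deg1 v : v \in A -> v \notin [set p.1 | p in S] -> deg_in e A v = 1 ->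
  deg_in e Jswap v <= 1.
Proof.
move=> vA vY v_deg1; rewrite -v_deg1; apply/subset_leq_card/subsetP => w.
rewrite /Jswap !inE => /andP [vw /orP [/andP [_ wA] | /imsetP [q qS wq]]].
  by rewrite vw wA.
have [q1A q1_deg q2A q2_deg q12] := S_JsetP qS.
have vq : v = q.1 by apply: (deg1_neighbours_eq q2A q2_deg) => //; rewrite e_sym // -wq.
by move: vY; rewrite vq; case/imsetP; exists q.
Qed.

Lemma Jswap_deg_snd p : p \in S -> deg_in e Jswap p.2 <= 1.
Proof.
move=> pS; have [p1A _ _ p2_deg p12] := S_JsetP pS.
have : #|(nbhd e p.2 :&: A) :\ p.1| = 1.
  by move: p2_deg; rewrite /deg_in (cardsD1 p.1) !inE e_sym p12 p1A => [[]].
move <-; apply/subset_leq_card/subsetP => w.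
rewrite /Jswap !inE => /andP [p2w /orP [/andP [wY wA] | /imsetP [q qS wq]]].
  by rewrite p2w wA !andbT; apply: contraNneq wY => ->; apply/imsetP; exists p.
have pq : p != q by apply: contraTneq p2w => ->; rewrite wq e_irr.
by have [_] := S_nonadj pS qS pq; rewrite -wq p2w.
Qed.

Lemma Jswap_AI : AI_set e Jswap.
Proof.
move=> v; rewrite /Jswap inE => /orP [/setDP [vA vY] | /imsetP [p pS ->]].
  move: (A_AI vA); rewrite leq_eqVlt ltnS leqn0 => /orP [] /eqP v_deg.
    exact: Jswap_deg_deg1.
  exact: Jswap_deg_isolated.
exact: Jswap_deg_snd.
Qed.

Lemma Jswap_max_indep :
  exists2 K : {set V}, K \subset Jswap & independent e K /\ #|K| = alpha e.
Proof.
set Y := [set p.1 | p in S].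
have YA : Y \subset A by apply/subsetP => _ /imsetP [p pS ->]; have [] := S_JsetP pS.
have Y_deg1 : {in Y, forall y, deg_in e A y = 1}.
  by move=> _ /imsetP [p pS ->]; have [] := S_JsetP pS.
have Y_ind : independent e Y.
  apply/independentP => _ _ /imsetP [p pS ->] /imsetP [q qS ->].
  case: (eqVneq p q) => [-> | pq]; first by rewrite e_irr.
  by have [] := S_nonadj pS qS pq.
have [KAY K_ind K_card] := exchangeP IA I_ind YA Y_deg1 Y_ind.
exists (exchange I Y); last by rewrite K_card.
exact: subset_trans KAY (subsetUl _ _).
Qed.

Lemma card_Jswap : #|A| <= #|Jswap|.
Proof.
have disj : [disjoint A :\: [set p.1 | p in S] & [set p.2 | p in S]].
  rewrite disjoint_sym disjoints_subset; apply/subsetP => _ /imsetP [p pS ->].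
  by have [_ _ p2A _ _] := S_JsetP pS; rewrite !inE negb_and p2A orbT.
rewrite /Jswap cardsU_disjoint // -(cardsID [set p.1 | p in S] A) addnC leq_add2l.
apply: leq_trans (subset_leq_card (subsetIr _ _)) _.
apply: leq_trans (leq_imset_card _ _) _.
rewrite card_in_imset // => p q pS qS.
by apply: Jset_snd_inj; exact: (subsetP SJ).
Qed.

Lemma Jswap_MAI : MAI_set e Jswap.
Proof.
split; first by split; [exact: Jswap_AI | exact: Jswap_max_indep].
by move=> A' /A_max /leq_trans; apply; exact: card_Jswap.
Qed.

Lemma Jset_snd_in_Jswap : [set p in Jset e A | p.2 \in Jswap] = S.
Proof.
apply/setP => p; rewrite inE; apply/andP/idP => [[pJ] | pS]; last first.
  by split; [exact: (subsetP SJ) | apply/setUP; right; apply/imsetP; exists p].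
rewrite /Jswap !inE => /orP [/andP [_ p2A] | /imsetP [q qS p2q]].
  by have [_ _ p2nA _ _] := JsetP pJ; rewrite p2A in p2nA.
by rewrite (Jset_snd_inj pJ (subsetP SJ _ qS) p2q).
Qed.

End HIndependent.

Lemma MAI_sets_of_H_independent :
  exists s : seq {set V},
    [/\ uniq s, (forall A', A' \in s -> MAI_set e A') & IH e A <= size s].
Proof.
pose HS := [set S : {set V * V} | (S \subset Jset e A) &&
  [forall p in S, forall q in S, ~~ H_adj e p q]].
have HSP S : S \in HS -> S \subset Jset e A /\ {in S &, forall p q, ~~ H_adj e p q}.
  rewrite inE => /andP [SJ /forall_inP S_ind]; split=> // p q pS qS.
  by move/forall_inP: (S_ind p pS); apply.
exists (map Jswap (enum HS)); split.
- rewrite map_inj_in_uniq ?enum_uniq // => S1 S2.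
  rewrite !mem_enum => /HSP [SJ1 _] /HSP [SJ2 _] E.
  by rewrite -(Jset_snd_in_Jswap SJ1) -(Jset_snd_in_Jswap SJ2) E.
- by move=> A' /mapP [S]; rewrite mem_enum => /HSP [SJ S_ind] ->; exact: Jswap_MAI.
- by rewrite size_map -cardE.
Qed.

End MaxIndependent.
End AlmostIndependent.

Theorem lemma9 (n : nat) (e : rel 'I_n) (A : {set 'I_n}) :
  simple_graph e -> cubic e -> girth_at_least e 16 -> MAI_set e A ->
  exists s : seq {set 'I_n},
    [/\ uniq s, (forall A', A' \in s -> MAI_set e A') & IH e A <= size s].
Proof.
move=> [e_sym e_irr] cub girth [[A_AI [I IA [I_ind I_card]]] A_max].
have no_triangle := triangle_free_of_girth e_irr girth (isT : 3 < 16).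
exact: (MAI_sets_of_H_independent e_sym e_irr A_AI IA no_triangle I_ind I_card cub A_max).
Qed.
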